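(* In the setting of the context, let \[ I(t)=N-\tilde S e^{(\beta/\gamma)\tilde R}\varphi^{-1}(t)+\frac{\gamma}{\beta}\log\varphi^{-1}(t)-\tilde E e^{-\delta t}-\tilde S e^{(\beta/\gamma)\tilde R}e^{-\delta t}\int_{\varphi^{-1}(t)}^{u_0}e^{\delta\varphi(v)}dv\qquad(t\ge0). \] Then $I(\infty):=\lim_{t\to\infty}I(t)=0$, $I(t)>0$ on $[0,\infty)$, and $I$ attains its maximum $\max_{t\ge0}I(t)$ at some $t=T_2\in\{T: I'(T)=0\}$, where for $T>0$ \[ I'(T)=-\frac{\gamma+\delta}{\beta}\psi\bigl(\varphi^{-1}(T)\bigr)+\delta\Bigl(N-\tilde S e^{(\beta/\gamma)\tilde R}\varphi^{-1}(T)+\frac{\gamma}{\beta}\log\varphi^{-1}(T)\Bigr). \]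
   Context: Let $\beta,\gamma,\delta>0$ be constants and $\tilde S,\tilde E,\tilde I,\tilde R$ real numbers with $N:=\tilde S+\tilde E+\tilde I+\tilde R>0$. Standing assumptions: (A1) $\tilde I>0$; (A2) $\tilde E>(\gamma/\delta)\tilde I$; (A3) $\tilde S>\delta\tilde E/(\beta\tilde I)$; (A4) $\tilde R\ge 0$ and $N>\tilde S e^{(\beta/\gamma)\tilde R}+\tilde R$. Let $\alpha$ be the unique solution in $(\tilde R,N)$ of $x=N-\tilde S e^{(\beta/\gamma)\tilde R}e^{-(\beta/\gamma)x}$, and assume (A5) $\tilde S<(\gamma/\beta)e^{(\beta/\gamma)(\alpha-\tilde R)}$. Put $u_0:=e^{-(\beta/\gamma)\tilde R}$, $u_\infty:=e^{-(\beta/\gamma)\alpha}$. Let $\psi$ be the unique function, continuous and positive on $(u_\infty,u_0]$ and $C^1$ on $(u_\infty,u_0)$, satisfying $\psi'(u)\psi(u)-\frac{\gamma+\delta}{u}\psi(u)=-\delta\,\frac{\beta N-\beta\tilde S e^{(\beta/\gamma)\tilde R}u+\gamma\log u}{u}$ on $(u_\infty,u_0)$ and $\psi(u_0)=\beta\tilde I$. Let $\varphi(u):=\int_u^{u_0}\frac{d\xi}{\xi\psi(\xi)}$; $\varphi$ is a strictly decreasing continuous bijection from $(u_\infty,u_0]$ onto $[0,\infty)$, $C^1$ on $(u_\infty,u_0)$, with inverse $\varphi^{-1}:[0,\infty)\to(u_\infty,u_0]$. *)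

From Stdlib Require Export Reals.
From Coquelicot Require Export Coquelicot.
Open Scope R_scope.

Definition phi_of (psi : R -> R) (u0 u : R) : R :=
  RInt (fun xi => / (xi * psi xi)) u u0.

Definition I_of (beta gamma delta N St Et Rt : R) (psi : R -> R) (u0 : R)
  (phinv : R -> R) (t : R) : R :=
  N - St * exp (beta / gamma * Rt) * phinv t + gamma / beta * ln (phinv t)
  - Et * exp (- delta * t)
  - St * exp (beta / gamma * Rt) * exp (- delta * t)
    * RInt (fun v => exp (delta * phi_of psi u0 v)) (phinv t) u0.

(* Along the ODE for psi, the quantity
     e^{delta phi(u)} (G(u) - psi(u)/beta) - c \int_u^{u0} e^{delta phi},
   with G(u) = N - c u + (gamma/beta) log u and c = St e^{(beta/gamma) Rt}, has zero
   derivative in u; its value Et at u0 yields the closed form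
     psi(u)/beta = G(u) - e^{-delta phi(u)} (Et + c \int_u^{u0} e^{delta phi}),
   i.e. I(t) = psi(phi^{-1}(t))/beta.  Hence I > 0 and I(t) <= G(phi^{-1}(t)), which
   tends to G(u_inf) = 0.  The formula for I' is the chain rule with
   (phi^{-1})' = -u psi(u) and the ODE.  Finally psi'(u0-) = (gamma It - delta Et)/(u0 It)
   < 0 by (A2), so psi exceeds psi(u0) just left of u0, while psi <= beta G -> 0 at
   u_inf: psi has an interior maximum u_m, and T2 = phi(u_m) maximizes I. *)

From Stdlib Require Import Reals Lra.
From Coquelicot Require Import Coquelicot.
Open Scope R_scope.

Lemma continuous_Rmin_r (h : R -> R) (lo a x : R) :
  (forall y, lo < y < a -> continuous h y) ->
  filterlim h (at_left a) (locally (h a)) ->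
  lo < x -> continuous (fun y => h (Rmin y a)) x.
Proof.
  intros Hc Hl Hx.
  destruct (Rtotal_order x a) as [Hxa | [-> | Hax]].
  - apply (continuous_ext_loc _ h); [| apply Hc; lra].
    apply (locally_interval _ x lo a); try easy.
    intros y _ Hy; simpl in Hy; rewrite Rmin_left; lra.
  - apply filterlim_locally; intros eps.
    destruct (proj1 (filterlim_locally _ _) Hl eps) as [d Hd].
    exists d; intros y Hy.
    rewrite (Rmin_left a a) by lra.
    destruct (Rlt_or_le y a) as [Hya | Hay].
    + rewrite Rmin_left by lra; now apply Hd.
    + rewrite Rmin_right by lra; apply ball_center.
  - apply (continuous_ext_loc _ (fun _ => h a)); [| apply continuous_const].
    apply (locally_interval _ x a p_infty); try easy.
    intros y Hy _; simpl in Hy; rewrite Rmin_right; lra.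
Qed.

Lemma is_derive_RInt_lower (f : R -> R) (lo b w : R) :
  (forall x, lo < x -> continuous f x) -> lo < w -> lo < b ->
  is_derive (fun x => RInt f x b) w (- f w).
Proof.
  intros Hf Hw Hb.
  apply (is_derive_RInt' f _ w b); [| now apply Hf].
  apply (locally_interval _ w lo p_infty); try easy.
  intros a Ha _; simpl in Ha.
  apply (RInt_correct (V := R_CompleteNormedModule)),
        (ex_RInt_continuous (V := R_CompleteNormedModule)).
  intros z [Hz _]; apply Hf.
  apply Rlt_le_trans with (Rmin a b); [now apply Rmin_glb_lt | exact Hz].
Qed.

Lemma is_derive_neg_lt (F D : R -> R) (a b : R) :
  a < b ->
  (forall x, a < x < b -> is_derive F x (D x)) ->
  (forall x, a <= x <= b -> continuous F x) ->
  (forall x, a <= x <= b -> D x < 0) ->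
  F b < F a.
Proof.
  intros Hab HF Hc HD.
  destruct (MVT_gen F a b D) as [x [Hx Heq]];
    rewrite ?Rmin_left, ?Rmax_right in * by lra.
  - intros x Hx; apply HF; exact Hx.
  - intros x Hx; apply continuity_pt_filterlim, Hc; exact Hx.
  - assert (D x < 0) by (apply HD; exact Hx); nra.
Qed.

Lemma is_derive_zero_eq (F : R -> R) (a b : R) :
  a <= b ->
  (forall x, a < x < b -> is_derive F x 0) ->
  (forall x, a <= x <= b -> continuous F x) ->
  F a = F b.
Proof.
  intros Hab HF Hc.
  destruct (MVT_gen F a b (fun _ => 0)) as [x [_ Heq]];
    rewrite ?Rmin_left, ?Rmax_right in * by lra.
  - intros x Hx; apply HF; exact Hx.
  - intros x Hx; apply continuity_pt_filterlim, Hc; exact Hx.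
  - lra.
Qed.

Lemma is_derive_max_0 (f : R -> R) (a b x l : R) :
  is_derive f x l -> a < x < b -> (forall y, a < y < b -> f y <= f x) -> l = 0.
Proof.
  intros Hf Hx Hmax.
  pose proof (proj1 (is_derive_Reals f x l) Hf) as Hlim.
  rewrite <- (derive_pt_eq_0 f x l (exist _ l Hlim) Hlim).
  apply (deriv_maximum f a b x); try lra.
  intros y Hy1 Hy2; apply Hmax; lra.
Qed.

Lemma is_derive_neg_end_lt (f D : R -> R) (a b : R) :
  a < b ->
  (forall x, a < x < b -> is_derive f x (D x)) ->
  (forall x, a < x <= b -> continuous f x) ->
  continuous D b -> D b < 0 ->
  exists x, a < x < b /\ f b < f x.
Proof.
  intros Hab Hf Hc HDc HDb.
  destruct (proj1 (filterlim_locally _ _) HDc (mkposreal (- D b) ltac:(lra)))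
    as [[eta Heta] Hnear]; simpl in Hnear.
  set (x := Rmax (b - eta / 2) ((a + b) / 2)).
  assert (Hx : a < x < b /\ b - eta / 2 <= x)
    by (unfold x, Rmax; destruct Rle_dec; lra).
  exists x; split; [lra |].
  apply (is_derive_neg_lt f D); [lra | | |].
  - intros y Hy; apply Hf; lra.
  - intros y Hy; apply Hc; lra.
  - intros y Hy.
    assert (Hball : Rabs (D y - D b) < - D b).
    { apply (Hnear y). change (Rabs (y - b) < eta). apply Rabs_lt_between; lra. }
    apply Rabs_lt_between in Hball; lra.
Qed.

Lemma continuous_attains_max (f : R -> R) (a w y b : R) :
  a < w -> w <= y <= b ->
  (forall x, w <= x <= b -> continuous f x) ->
  (forall x, a < x < w -> f x <= f y) ->
  exists m, w <= m <= b /\ forall x, a < x <= b -> f x <= f m.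
Proof.
  intros Haw Hy Hc Hleft.
  destruct (continuity_ab_maj f w b) as [m [Hm Hmw]]; [lra | |].
  { intros x Hx; apply continuity_pt_filterlim, Hc; exact Hx. }
  exists m; split; [exact Hmw |].
  intros x Hx; destruct (Rlt_or_le x w).
  - apply Rle_trans with (f y); [apply Hleft; lra | apply Hm; lra].
  - apply Hm; lra.
Qed.

Lemma continuous_inverse_decreasing (f g : R -> R) (a b t : R) :
  (forall x y, a < x -> x < y -> y < b -> f y < f x) ->
  a < g t < b ->
  locally t (fun s => a < g s < b /\ f (g s) = s) ->
  continuous g t.
Proof.
  intros Hdec Hgt Hloc.
  assert (Hle : forall x y, a < x -> x <= y -> y < b -> f y <= f x).
  { intros x y Hx [Hxy | <-] Hy; [left; now apply Hdec | now right]. }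
  assert (Hft : f (g t) = t) by exact (proj2 (locally_singleton _ _ Hloc)).
  apply filterlim_locally; intros [eps Heps]; simpl.
  set (w1 := Rmax (g t - eps) ((a + g t) / 2)).
  set (w2 := Rmin (g t + eps) ((g t + b) / 2)).
  assert (Hw1 : a < w1 < g t /\ g t - eps <= w1)
    by (unfold w1, Rmax; destruct Rle_dec; lra).
  assert (Hw2 : g t < w2 < b /\ w2 <= g t + eps)
    by (unfold w2, Rmin; destruct Rle_dec; lra).
  assert (H1 : t < f w1) by (rewrite <- Hft; apply Hdec; lra).
  assert (H2 : f w2 < t) by (rewrite <- Hft; apply Hdec; lra).
  generalize (filter_and _ _ Hloc
    (locally_interval (fun s => f w2 < s < f w1) t (f w2) (f w1) H2 H1
       (fun s Hs1 Hs2 => conj Hs1 Hs2))).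
  apply filter_imp; intros s [[Hgs Hfs] [Hs1 Hs2]].
  assert (Hgs1 : w1 < g s).
  { destruct (Rlt_or_le w1 (g s)) as [H | H]; [exact H |].
    assert (f w1 <= f (g s)) by (apply Hle; lra); lra. }
  assert (Hgs2 : g s < w2).
  { destruct (Rlt_or_le (g s) w2) as [H | H]; [exact H |].
    assert (f (g s) <= f w2) by (apply Hle; lra); lra. }
  change (Rabs (g s - g t) < eps); apply Rabs_lt_between; lra.
Qed.

Lemma Rabs_inv_sub_lt (q l eps : R) :
  l <> 0 -> 0 < eps ->
  Rabs (q - l) < Rmin (Rabs l / 2) (eps * (Rabs l * Rabs l) / 4) ->
  Rabs (/ q - / l) < eps.
Proof.
  intros Hl Heps Hq.
  pose proof (Rmin_l (Rabs l / 2) (eps * (Rabs l * Rabs l) / 4)).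
  pose proof (Rmin_r (Rabs l / 2) (eps * (Rabs l * Rabs l) / 4)).
  assert (Hql : Rabs l / 2 <= Rabs q).
  { pose proof (Rabs_triang_inv l q); rewrite Rabs_minus_sym in Hq; lra. }
  assert (Hq0 : q <> 0).
  { intros ->; pose proof (Rabs_pos_lt l Hl); rewrite Rabs_R0 in Hql; lra. }
  assert (Heq : Rabs (/ q - / l) * (Rabs q * Rabs l) = Rabs (q - l)).
  { rewrite <- Rabs_Ropp, <- !Rabs_mult; f_equal; field; auto. }
  pose proof (Rabs_pos (/ q - / l)) as HA; pose proof (Rabs_pos_lt l Hl) as HC.
  set (A := Rabs (/ q - / l)) in *; set (B := Rabs q) in *; set (C := Rabs l) in *.
  assert (A * (C / 2 * C) <= A * (B * C))
    by (apply Rmult_le_compat_l; [exact HA | apply Rmult_le_compat_r; lra]).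
  assert (0 < eps * (C * C)) by (apply Rmult_lt_0_compat; nra).
  apply (Rmult_lt_reg_r (C * C)); nra.
Qed.

Lemma is_derive_inverse (f g : R -> R) (t l : R) :
  is_derive f (g t) l -> l <> 0 -> continuous g t ->
  locally t (fun s => f (g s) = s) -> is_derive g t (/ l).
Proof.
  intros Hf Hl Hg [r Hr].
  apply is_derive_Reals; apply is_derive_Reals in Hf.
  intros eps Heps.
  assert (He : 0 < Rmin (Rabs l / 2) (eps * (Rabs l * Rabs l) / 4)).
  { pose proof (Rabs_pos_lt l Hl); apply Rmin_pos; [lra |].
    apply Rdiv_lt_0_compat; [apply Rmult_lt_0_compat; nra | lra]. }
  destruct (Hf _ He) as [d1 Hd1].
  destruct (proj1 (filterlim_locally _ _) Hg d1) as [d2 Hd2].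
  exists (mkposreal _ (Rmin_pos _ _ (cond_pos d2) (cond_pos r))); simpl.
  intros h Hh0 Hh.
  assert (Hth : forall d, Rmin d2 r <= d -> ball t d (t + h)).
  { intros d Hd; change (Rabs (t + h - t) < d); replace (t + h - t) with h by ring; lra. }
  pose proof (Hr _ (Hth r (Rmin_r _ _))) as Hfs; pose proof (Hr t (ball_center t r)) as Hft.
  set (k := g (t + h) - g t).
  assert (Hk : k <> 0).
  { intros Hk; apply Hh0; unfold k in Hk.
    replace (g (t + h)) with (g t) in Hfs by lra; lra. }
  pose proof (Hd1 k Hk (Hd2 _ (Hth d2 (Rmin_l _ _)))) as Hq.
  replace (g t + k) with (g (t + h)) in Hq by (unfold k; ring).
  rewrite Hfs, Hft in Hq; replace (t + h - t) with h in Hq by ring.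
  change (Rabs (k / h - / l) < eps).
  replace (k / h) with (/ (h / k)) by (field; auto).
  now apply Rabs_inv_sub_lt.
Qed.

Lemma locally_pos (t : R) (P : R -> Prop) :
  0 < t -> (forall s, 0 < s -> P s) -> locally t P.
Proof.
  intros Ht HP; apply (locally_interval _ t 0 p_infty); try easy.
  intros s Hs _; apply HP, Hs.
Qed.

Section InfectedCurve.

Variables (beta gamma delta N c Et It ui u0 : R) (psi phinv : R -> R).

(* [c] stands for St e^{(beta/gamma) Rt} and [ui] for u_inf; [G ui = 0] is the
   equation defining alpha and [G u0 = Et + It] says N = St + Et + It + Rt. *)
Definition G (u : R) : R := N - c * u + gamma / beta * ln u.

Hypothesis Hbeta : 0 < beta.
Hypothesis Hc : 0 <= c.
Hypothesis HEt : 0 <= Et.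
Hypothesis HEtIt : gamma * It < delta * Et.
Hypothesis Hui : 0 < ui.
Hypothesis Hui_u0 : ui < u0.
Hypothesis G_ui : G ui = 0.
Hypothesis G_u0 : G u0 = Et + It.
Hypothesis psi_pos : forall u, ui < u <= u0 -> 0 < psi u.
Hypothesis psi_derivable : forall u, ui < u < u0 -> ex_derive psi u.
Hypothesis psi_left_continuous : filterlim psi (at_left u0) (locally (psi u0)).
Hypothesis psi_ode : forall u, ui < u < u0 ->
  Derive psi u * psi u - (gamma + delta) / u * psi u = - delta * beta * G u / u.
Hypothesis psi_u0 : psi u0 = beta * It.
Hypothesis phinv_spec : forall t, 0 <= t ->
  ui < phinv t <= u0 /\ phi_of psi u0 (phinv t) = t.

(* [psi] frozen beyond [u0]: continuous on (ui, +oo), so that integrals and the mean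
   value theorem reach the endpoint [u0]; [Phi] and [J] agree with phi and its
   exponential integral on (ui, u0]. *)
Definition psi_ext (x : R) : R := psi (Rmin x u0).

Definition Phi (w : R) : R := RInt (fun x => / (x * psi_ext x)) w u0.

Definition J (w : R) : R := RInt (fun v => exp (delta * Phi v)) w u0.

Definition first_integral (u : R) : R :=
  exp (delta * Phi u) * (G u - psi_ext u / beta) - c * J u.

Definition I (t : R) : R :=
  G (phinv t) - Et * exp (- delta * t)
  - c * exp (- delta * t) * RInt (fun v => exp (delta * phi_of psi u0 v)) (phinv t) u0.

Lemma psi_ext_eq (x : R) : x <= u0 -> psi_ext x = psi x.
Proof. intros Hx; unfold psi_ext; now rewrite Rmin_left. Qed.

Lemma psi_ext_pos (x : R) : ui < x -> 0 < psi_ext x.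
Proof.
  intros Hx; apply psi_pos; split; [now apply Rmin_glb_lt | apply Rmin_r].
Qed.

Lemma continuous_psi_ext (x : R) : ui < x -> continuous psi_ext x.
Proof.
  apply (continuous_Rmin_r psi ui u0); [| exact psi_left_continuous].
  intros y Hy; exact (ex_derive_continuous psi y (psi_derivable y Hy)).
Qed.

Lemma is_derive_psi_ext (u : R) : ui < u < u0 -> is_derive psi_ext u (Derive psi u).
Proof.
  intros Hu; apply (is_derive_ext_loc psi); [| now apply Derive_correct, psi_derivable].
  apply (locally_interval _ u ui u0); try easy.
  intros y _ Hy; symmetry; apply psi_ext_eq; simpl in Hy; lra.
Qed.

Lemma continuous_G (u : R) : 0 < u -> continuous G u.
Proof.
  intros Hu; refine (ex_derive_continuous G u _); unfold G; auto_derive; lra.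
Qed.

Lemma Derive_psi (u : R) : ui < u < u0 ->
  Derive psi u = ((gamma + delta) * psi u - delta * beta * G u) / (u * psi u).
Proof.
  intros Hu; pose proof (psi_pos u ltac:(lra)) as Hp.
  apply (Rmult_eq_reg_r (psi u)); [| lra].
  replace (Derive psi u * psi u)
    with (Derive psi u * psi u - (gamma + delta) / u * psi u + (gamma + delta) / u * psi u)
    by ring.
  rewrite psi_ode by exact Hu; field; lra.
Qed.

Lemma is_derive_Phi (w : R) : ui < w -> is_derive Phi w (- / (w * psi_ext w)).
Proof.
  intros Hw; apply (is_derive_RInt_lower (fun x => / (x * psi_ext x)) ui u0 w);
    [| exact Hw | exact Hui_u0].
  intros x Hx; apply continuous_Rinv_comp.
  - apply (continuous_mult (fun x => x) psi_ext);
      [apply continuous_id | now apply continuous_psi_ext].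
  - pose proof (psi_ext_pos x Hx); nra.
Qed.

Lemma continuous_Phi (w : R) : ui < w -> continuous Phi w.
Proof.
  intros Hw; exact (ex_derive_continuous Phi w (ex_intro _ _ (is_derive_Phi w Hw))).
Qed.

Lemma Phi_decreasing (a b : R) : ui < a -> a < b -> Phi b < Phi a.
Proof.
  intros Ha Hab; apply (is_derive_neg_lt _ (fun x => - / (x * psi_ext x))); [exact Hab | | |].
  - intros x Hx; apply is_derive_Phi; lra.
  - intros x Hx; apply continuous_Phi; lra.
  - intros x Hx; pose proof (psi_ext_pos x ltac:(lra)).
    assert (0 < / (x * psi_ext x)) by (apply Rinv_0_lt_compat; nra); lra.
Qed.

Lemma Phi_u0 : Phi u0 = 0.
Proof. exact (RInt_point (V := R_CompleteNormedModule) u0 _). Qed.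

Lemma phi_of_Phi (w : R) : ui < w <= u0 -> phi_of psi u0 w = Phi w.
Proof.
  intros Hw; apply RInt_ext; intros x Hx.
  rewrite Rmin_left, Rmax_right in Hx by lra.
  now rewrite psi_ext_eq by lra.
Qed.

Lemma Phi_phinv (t : R) : 0 <= t -> Phi (phinv t) = t.
Proof.
  intros Ht; destruct (phinv_spec t Ht) as [Hr Hphi].
  now rewrite <- phi_of_Phi.
Qed.

Lemma phinv_Phi (w : R) : ui < w <= u0 -> 0 <= Phi w /\ phinv (Phi w) = w.
Proof.
  intros Hw.
  assert (HPw : 0 <= Phi w).
  { rewrite <- Phi_u0; destruct (proj2 Hw) as [Hlt | ->]; [left | right];
      [now apply Phi_decreasing | reflexivity]. }
  split; [exact HPw |].
  destruct (phinv_spec _ HPw) as [Hr _]; pose proof (Phi_phinv _ HPw) as Heq.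
  destruct (Rtotal_order (phinv (Phi w)) w) as [Hlt | [Heq' | Hgt]]; [| exact Heq' |].
  - pose proof (Phi_decreasing _ _ (proj1 Hr) Hlt); lra.
  - pose proof (Phi_decreasing _ _ (proj1 Hw) Hgt); lra.
Qed.

Lemma phinv_lt_u0 (t : R) : 0 < t -> phinv t < u0.
Proof.
  intros Ht; destruct (phinv_spec t ltac:(lra)) as [[_ [Hlt | Heq]] _]; [exact Hlt |].
  pose proof (Phi_phinv t ltac:(lra)) as HP; rewrite Heq, Phi_u0 in HP; lra.
Qed.

Lemma continuous_phinv (t : R) : 0 < t -> continuous phinv t.
Proof.
  intros Ht; apply (continuous_inverse_decreasing Phi phinv ui u0).
  - intros x y Hx Hxy _; now apply Phi_decreasing.
  - split; [apply phinv_spec; lra | now apply phinv_lt_u0].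
  - apply locally_pos; [exact Ht |]; intros s Hs.
    split; [split; [apply phinv_spec; lra | now apply phinv_lt_u0] |].
    apply Phi_phinv; lra.
Qed.

Lemma is_derive_phinv (t : R) : 0 < t ->
  is_derive phinv t (- (phinv t * psi (phinv t))).
Proof.
  intros Ht; destruct (phinv_spec t ltac:(lra)) as [[Hu Hu0] _].
  pose proof (psi_ext_pos _ Hu) as Hp; pose proof (psi_pos _ (conj Hu Hu0)) as Hp'.
  replace (- (phinv t * psi (phinv t))) with (/ (- / (phinv t * psi_ext (phinv t)))).
  - apply (is_derive_inverse Phi); [now apply is_derive_Phi | | now apply continuous_phinv |].
    + apply Ropp_neq_0_compat, Rinv_neq_0_compat, Rgt_not_eq, Rmult_lt_0_compat; lra.
    + apply locally_pos; [exact Ht |]; intros s Hs; apply Phi_phinv; lra.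
  - rewrite psi_ext_eq by exact Hu0; field; split; lra.
Qed.

Lemma is_lim_phinv : is_lim phinv p_infty ui.
Proof.
  apply is_lim_spec; intros [eps Heps].
  set (w := Rmin (ui + eps) u0).
  assert (Hw : ui < w <= u0 /\ w <= ui + eps) by (unfold w, Rmin; destruct Rle_dec; lra).
  destruct (phinv_Phi w (proj1 Hw)) as [HPw _].
  exists (Phi w); intros t Ht; simpl.
  destruct (phinv_spec t ltac:(lra)) as [[Hu _] _].
  pose proof (Phi_phinv t ltac:(lra)) as HPt.
  assert (phinv t < w).
  { destruct (Rlt_or_le (phinv t) w) as [H | [H | H]]; [exact H | |].
    - pose proof (Phi_decreasing _ _ (proj1 (proj1 Hw)) H); lra.
    - rewrite H in Ht; lra. }
  apply Rabs_lt_between; lra.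
Qed.

Lemma is_derive_J (w : R) : ui < w -> is_derive J w (- exp (delta * Phi w)).
Proof.
  intros Hw; apply (is_derive_RInt_lower (fun v => exp (delta * Phi v)) ui u0 w);
    [| exact Hw | exact Hui_u0].
  intros x Hx; apply continuous_exp_comp.
  apply (continuous_mult (fun _ => delta) Phi);
    [apply continuous_const | now apply continuous_Phi].
Qed.

Lemma continuous_J (w : R) : ui < w -> continuous J w.
Proof.
  intros Hw; exact (ex_derive_continuous J w (ex_intro _ _ (is_derive_J w Hw))).
Qed.

Lemma J_u0 : J u0 = 0.
Proof. exact (RInt_point (V := R_CompleteNormedModule) u0 _). Qed.

Lemma J_nonneg (w : R) : ui < w <= u0 -> 0 <= J w.
Proof.
  intros Hw; rewrite <- J_u0; destruct (proj2 Hw) as [Hlt | ->]; [left | right; reflexivity].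
  apply (is_derive_neg_lt J (fun x => - exp (delta * Phi x))); [exact Hlt | | |].
  - intros x Hx; apply is_derive_J; lra.
  - intros x Hx; apply continuous_J; lra.
  - intros x _; pose proof (exp_pos (delta * Phi x)); lra.
Qed.

Lemma is_derive_first_integral (u : R) : ui < u < u0 -> is_derive first_integral u 0.
Proof.
  intros Hu; pose proof (psi_pos u ltac:(lra)) as Hp.
  pose proof (is_derive_psi_ext u Hu) as HdPsi.
  pose proof (is_derive_Phi u (proj1 Hu)) as HdPhi.
  pose proof (is_derive_J u (proj1 Hu)) as HdJ.
  unfold first_integral, G; auto_derive.
  - repeat split; try (eexists; eassumption); lra.
  - rewrite (is_derive_unique (fun x : R => Phi x) _ _ HdPhi),
      (is_derive_unique (fun x : R => psi_ext x) _ _ HdPsi),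
      (is_derive_unique (fun x : R => J x) _ _ HdJ), Derive_psi, psi_ext_eq by lra.
    unfold G; field; lra.
Qed.

Lemma continuous_first_integral (u : R) : ui < u -> continuous first_integral u.
Proof.
  intros Hu; unfold first_integral.
  apply (continuous_minus (fun u => exp (delta * Phi u) * (G u - psi_ext u / beta))
                          (fun u => c * J u)).
  - apply (continuous_mult (fun u => exp (delta * Phi u)) (fun u => G u - psi_ext u / beta)).
    + apply continuous_exp_comp, (continuous_mult (fun _ => delta) Phi);
        [apply continuous_const | now apply continuous_Phi].
    + apply (continuous_minus G (fun u => psi_ext u / beta)); [apply continuous_G; lra |].
      apply (continuous_mult psi_ext (fun _ => / beta));
        [now apply continuous_psi_ext | apply continuous_const].
  - apply (continuous_mult (fun _ => c) J); [apply continuous_const | now apply continuous_J].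
Qed.

Lemma first_integral_u0 : first_integral u0 = Et.
Proof.
  unfold first_integral; rewrite Phi_u0, J_u0, psi_ext_eq, psi_u0, G_u0 by lra.
  rewrite Rmult_0_r, exp_0; field; lra.
Qed.

Lemma psi_closed_form (u : R) : ui < u <= u0 ->
  psi u / beta = G u - exp (- delta * Phi u) * (Et + c * J u).
Proof.
  intros Hu.
  assert (Hfi : first_integral u = first_integral u0).
  { apply is_derive_zero_eq; [lra | |].
    - intros x Hx; apply is_derive_first_integral; lra.
    - intros x Hx; apply continuous_first_integral; lra. }
  rewrite first_integral_u0 in Hfi; unfold first_integral in Hfi.
  rewrite psi_ext_eq in Hfi by lra; rewrite <- Hfi.
  replace (exp (- delta * Phi u)) with (/ exp (delta * Phi u))
    by (rewrite <- exp_Ropp; f_equal; ring).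
  pose proof (exp_pos (delta * Phi u)); field; lra.
Qed.

Lemma psi_le_G (u : R) : ui < u <= u0 -> psi u <= beta * G u.
Proof.
  intros Hu.
  assert (Hpsi : psi u = beta * (psi u / beta)) by (field; lra).
  rewrite Hpsi, psi_closed_form by exact Hu.
  pose proof (exp_pos (- delta * Phi u)); pose proof (J_nonneg u Hu).
  assert (0 <= exp (- delta * Phi u) * (Et + c * J u))
    by (apply Rmult_le_pos; nra).
  nra.
Qed.

Lemma I_eq_psi (t : R) : 0 <= t -> I t = psi (phinv t) / beta.
Proof.
  intros Ht; destruct (phinv_spec t Ht) as [Hu _].
  rewrite psi_closed_form, Phi_phinv by assumption.
  unfold I, J; rewrite (RInt_ext _ (fun v => exp (delta * Phi v))); [ring |].
  intros x Hx; rewrite Rmin_left, Rmax_right in Hx by lra.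
  now rewrite phi_of_Phi by lra.
Qed.

Lemma I_pos (t : R) : 0 <= t -> 0 < I t.
Proof.
  intros Ht; rewrite I_eq_psi by exact Ht.
  apply Rdiv_lt_0_compat; [apply psi_pos, phinv_spec, Ht | exact Hbeta].
Qed.

Lemma is_lim_I : is_lim I p_infty 0.
Proof.
  apply (is_lim_le_le_loc (fun _ => 0) (fun t => G (phinv t))).
  - exists 0; intros t Ht; split; [left; apply I_pos; lra |].
    rewrite I_eq_psi by lra.
    pose proof (psi_le_G (phinv t) (proj1 (phinv_spec t ltac:(lra)))).
    apply (Rmult_le_reg_l beta); [exact Hbeta |].
    replace (beta * (psi (phinv t) / beta)) with (psi (phinv t)) by (field; lra); lra.
  - apply is_lim_const.
  - apply (is_lim_comp G phinv p_infty 0 ui); [| exact is_lim_phinv |].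
    + rewrite <- G_ui; apply is_lim_continuity, continuity_pt_filterlim, continuous_G, Hui.
    + exists 0; intros t Ht Heq; injection Heq as Heq.
      destruct (phinv_spec t ltac:(lra)) as [[Hu _] _]; lra.
Qed.

Lemma is_derive_I (T : R) : 0 < T ->
  is_derive I T (- (gamma + delta) / beta * psi (phinv T) + delta * G (phinv T)).
Proof.
  intros HT; destruct (phinv_spec T ltac:(lra)) as [[Hu _] _].
  pose proof (phinv_lt_u0 T HT) as Hu0; pose proof (psi_pos (phinv T) ltac:(lra)).
  pose proof (is_derive_phinv T HT) as Hdphinv.
  pose proof (Derive_correct psi _ (psi_derivable _ (conj Hu Hu0))) as Hdpsi.
  apply (is_derive_ext_loc (fun t => psi (phinv t) / beta)).
  { apply locally_pos; [exact HT |]; intros s Hs; symmetry; apply I_eq_psi; lra. }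
  auto_derive.
  - repeat split; eexists; eassumption.
  - rewrite (is_derive_unique (fun x : R => phinv x) _ _ Hdphinv), Derive_psi by lra.
    field; lra.
Qed.

Lemma psi_exceeds_u0 : exists u1, ui < u1 < u0 /\ psi u0 < psi u1.
Proof.
  (* [D] extends psi' continuously to [u0], where it is (gamma It - delta Et) / (u0 It). *)
  set (D := fun u => ((gamma + delta) * psi_ext u - delta * beta * G u) / (u * psi_ext u)).
  assert (HIt : 0 < beta * It) by (rewrite <- psi_u0; apply psi_pos; lra).
  destruct (is_derive_neg_end_lt psi_ext D ui u0) as [u1 [Hu1 Hlt]]; [exact Hui_u0 | | | | |].
  - intros x Hx; unfold D; rewrite psi_ext_eq, <- Derive_psi by lra.
    now apply is_derive_psi_ext.
  - intros x Hx; apply continuous_psi_ext; lra.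
  - assert (Hp0 := psi_ext_pos u0 Hui_u0).
    apply (continuous_mult (fun u => (gamma + delta) * psi_ext u - delta * beta * G u)
                           (fun u => / (u * psi_ext u))).
    + apply (continuous_minus (fun u => (gamma + delta) * psi_ext u)
                              (fun u => delta * beta * G u)).
      * apply (continuous_mult (fun _ => gamma + delta) psi_ext);
          [apply continuous_const | now apply continuous_psi_ext].
      * apply (continuous_mult (fun _ => delta * beta) G);
          [apply continuous_const | apply continuous_G; lra].
    + apply continuous_Rinv_comp; [| apply Rgt_not_eq, Rmult_lt_0_compat; lra].
      apply (continuous_mult (fun u => u) psi_ext);
        [apply continuous_id | now apply continuous_psi_ext].
  - unfold D; rewrite psi_ext_eq, psi_u0, G_u0 by lra.
    assert (0 < / (u0 * (beta * It))) by (apply Rinv_0_lt_compat; nra).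
    assert ((gamma + delta) * (beta * It) - delta * beta * (Et + It) < 0) by nra.
    unfold Rdiv; nra.
  - exists u1; split; [exact Hu1 |].
    now rewrite <- (psi_ext_eq u0), <- (psi_ext_eq u1) by lra.
Qed.

Lemma psi_attains_max : exists m, ui < m < u0 /\ forall u, ui < u <= u0 -> psi u <= psi m.
Proof.
  destruct psi_exceeds_u0 as [u1 [Hu1 Hgt]].
  assert (Hp1 : 0 < psi u1 / beta) by (apply Rdiv_lt_0_compat; [apply psi_pos; lra | lra]).
  destruct (proj1 (filterlim_locally _ _) (continuous_G ui Hui) (mkposreal _ Hp1))
    as [[eta Heta] Hnear]; simpl in Hnear.
  set (w := Rmin (ui + eta) u1).
  assert (Hw : ui < w <= u1 /\ w <= ui + eta) by (unfold w, Rmin; destruct Rle_dec; lra).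
  destruct (continuous_attains_max psi_ext ui w u1 u0) as [m [Hm Hmax]]; [lra | lra | | |].
  - intros x Hx; apply continuous_psi_ext; lra.
  - intros x Hx; rewrite !psi_ext_eq by lra.
    assert (HG : Rabs (G x - G ui) < psi u1 / beta)
      by (apply (Hnear x); change (Rabs (x - ui) < eta); apply Rabs_lt_between; lra).
    rewrite G_ui in HG; apply Rabs_lt_between in HG.
    pose proof (psi_le_G x ltac:(lra)).
    assert (HbG : beta * G x < beta * (psi u1 / beta)) by (apply Rmult_lt_compat_l; lra).
    replace (beta * (psi u1 / beta)) with (psi u1) in HbG by (field; lra); lra.
  - assert (Hm1 : psi_ext u1 <= psi_ext m) by (apply Hmax; lra).
    assert (Hmu0 : m < u0).
    { destruct (proj2 Hm) as [Hlt | Heq]; [exact Hlt |].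
      rewrite Heq, !psi_ext_eq in Hm1 by lra; lra. }
    exists m; split; [lra |].
    intros u Hu; rewrite <- (psi_ext_eq u), <- (psi_ext_eq m) by lra; now apply Hmax.
Qed.

Lemma I_attains_max :
  exists T2, 0 < T2 /\ is_derive I T2 0 /\ forall t, 0 <= t -> I t <= I T2.
Proof.
  destruct psi_attains_max as [m [Hm Hmax]].
  destruct (phinv_Phi m ltac:(lra)) as [_ Hinv].
  assert (HT2 : 0 < Phi m) by (rewrite <- Phi_u0; apply Phi_decreasing; lra).
  assert (Hglob : forall t, 0 <= t -> I t <= I (Phi m)).
  { intros t Ht; rewrite !I_eq_psi, Hinv by lra.
    apply Rmult_le_compat_r; [left; apply Rinv_0_lt_compat, Hbeta |].
    apply Hmax, phinv_spec, Ht. }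
  exists (Phi m); split; [exact HT2 | split; [| exact Hglob]].
  pose proof (is_derive_I _ HT2) as Hd.
  rewrite (is_derive_max_0 I 0 (Phi m + 1) (Phi m) _ Hd) in Hd; [exact Hd | lra |].
  intros y Hy; apply Hglob; lra.
Qed.

Lemma I_properties :
  is_lim I p_infty 0
  /\ (forall t, 0 <= t -> 0 < I t)
  /\ (forall T, 0 < T ->
        is_derive I T (- (gamma + delta) / beta * psi (phinv T) + delta * G (phinv T)))
  /\ (exists T2, 0 < T2 /\ is_derive I T2 0 /\ forall t, 0 <= t -> I t <= I T2).
Proof.
  split; [exact is_lim_I |].
  split; [exact I_pos |].
  split; [exact is_derive_I | exact I_attains_max].
Qed.

End InfectedCurve.

Theorem theorem10
  (beta gamma delta St Et It Rt alpha : R) (psi phinv : R -> R)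
  (Hbeta : 0 < beta) (Hgamma : 0 < gamma) (Hdelta : 0 < delta)
  (HN : 0 < St + Et + It + Rt)
  (A1 : 0 < It)
  (A2 : Et > gamma / delta * It)
  (A3 : St > delta * Et / (beta * It))
  (A4a : 0 <= Rt)
  (A4b : St + Et + It + Rt > St * exp (beta / gamma * Rt) + Rt)
  (* alpha: the unique solution in (Rt, N) of x = N - St e^{(b/g)Rt} e^{-(b/g)x} *)
  (Halpha_int : Rt < alpha < St + Et + It + Rt)
  (Halpha_eq : alpha = St + Et + It + Rt
                 - St * exp (beta / gamma * Rt) * exp (- (beta / gamma) * alpha))
  (A5 : St < gamma / beta * exp (beta / gamma * (alpha - Rt)))
  (* psi: continuous and positive on (u_inf, u0], C^1 on (u_inf, u0), solving the ODE *)
  (Hpsi_pos : forall u, exp (- (beta / gamma) * alpha) < u <= exp (- (beta / gamma) * Rt) ->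
                0 < psi u)
  (Hpsi_cont_left : filterlim psi (at_left (exp (- (beta / gamma) * Rt)))
                      (locally (psi (exp (- (beta / gamma) * Rt)))))
  (Hpsi_C1 : forall u, exp (- (beta / gamma) * alpha) < u < exp (- (beta / gamma) * Rt) ->
                ex_derive psi u /\ continuous (Derive psi) u)
  (Hpsi_ode : forall u, exp (- (beta / gamma) * alpha) < u < exp (- (beta / gamma) * Rt) ->
                Derive psi u * psi u - (gamma + delta) / u * psi u
                = - delta * (beta * (St + Et + It + Rt)
                             - beta * St * exp (beta / gamma * Rt) * u + gamma * ln u) / u)
  (Hpsi_u0 : psi (exp (- (beta / gamma) * Rt)) = beta * It)
  (* phinv: the inverse of phi : (u_inf, u0] -> [0, oo) *)
  (Hphinv : forall t, 0 <= t ->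
              exp (- (beta / gamma) * alpha) < phinv t <= exp (- (beta / gamma) * Rt)
              /\ phi_of psi (exp (- (beta / gamma) * Rt)) (phinv t) = t) :
  let N := St + Et + It + Rt in
  let u0 := exp (- (beta / gamma) * Rt) in
  let I := I_of beta gamma delta N St Et Rt psi u0 phinv in
  is_lim I p_infty 0
  /\ (forall t, 0 <= t -> 0 < I t)
  /\ (forall T, 0 < T ->
        is_derive I T
          (- (gamma + delta) / beta * psi (phinv T)
           + delta * (N - St * exp (beta / gamma * Rt) * phinv T
                      + gamma / beta * ln (phinv T))))
  /\ (exists T2, 0 < T2 /\ is_derive I T2 0 /\ forall t, 0 <= t -> I t <= I T2).
Proof.
  intros N u0 I.
  set (ui := exp (- (beta / gamma) * alpha)) in *.
  set (c := St * exp (beta / gamma * Rt)) in *.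
  assert (Hbg : 0 < beta / gamma) by (apply Rdiv_lt_0_compat; lra).
  assert (Hui : 0 < ui) by apply exp_pos.
  assert (HEtIt : gamma * It < delta * Et).
  { apply (Rmult_lt_compat_l delta) in A2; [| exact Hdelta].
    replace (delta * (gamma / delta * It)) with (gamma * It) in A2 by (field; lra); lra. }
  assert (HEt : 0 < Et) by nra.
  assert (HSt : 0 < St).
  { apply Rlt_trans with (delta * Et / (beta * It)); [| exact A3].
    apply Rdiv_lt_0_compat; apply Rmult_lt_0_compat; lra. }
  (* (A4), (A5) and the continuity of [Derive psi] only serve the existence of
     alpha and psi, which the statement assumes. *)
  apply (I_properties beta gamma delta N c Et It ui u0 psi phinv); try assumption.
  - left; apply Rmult_lt_0_compat; [exact HSt | apply exp_pos].
  - lra.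
  - apply exp_increasing; nra.
  - unfold G, ui at 2; rewrite ln_exp.
    replace (gamma / beta * (- (beta / gamma) * alpha)) with (- alpha) by (field; lra).
    unfold N; lra.
  - unfold G, c, u0; rewrite Rmult_assoc, <- exp_plus, ln_exp.
    replace (beta / gamma * Rt + - (beta / gamma) * Rt) with 0 by ring.
    rewrite exp_0; unfold N; field; lra.
  - intros u Hu; exact (proj1 (Hpsi_C1 u Hu)).
  - intros u Hu; rewrite Hpsi_ode by exact Hu; unfold G, c, N; field; split; lra.
Qed.
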